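(* Let $P\in W^{(l)}\setminus\{0\}$ and let $(\rho_1,\sigma_1)>(\rho_2,\sigma_2)$ be consecutive elements of $\overline{\mathrm{Val}}(P)$ (no element of $\overline{\mathrm{Val}}(P)$ lies strictly between them). Let $(\rho,\sigma)\in\mathfrak V$. (1) If $(\rho_1,\sigma_1)\in\mathrm{Val}(P)$ and $(\rho_1,\sigma_1)>(\rho,\sigma)\ge(\rho_2,\sigma_2)$, then $\mathrm{Succ}_{\rho,\sigma}(P)$ is defined and equals $(\rho_1,\sigma_1)$. (2) If $(\rho_2,\sigma_2)\in\mathrm{Val}(P)$ and $(\rho_1,\sigma_1)\ge(\rho,\sigma)>(\rho_2,\sigma_2)$, then $\mathrm{Pred}_{\rho,\sigma}(P)$ is defined and equals $(\rho_2,\sigma_2)$. (3) If $(\rho_1,\sigma_1)>(\rho,\sigma)>(\rho_2,\sigma_2)$, then $\{\mathrm{st}_{\rho_1,\sigma_1}(P)\}=\mathrm{Supp}(\ell_{\rho,\sigma}(P))=\{\mathrm{en}_{\rho_2,\sigma_2}(P)\}$.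
   Context: $K$ is a field of characteristic zero, $l\in\mathbb{N}$. $W^{(l)}$ is the associative $K$-algebra with $K$-basis $\{X^{i/l}Y^j:i\in\mathbb{Z},j\in\mathbb{N}_0\}$, powers of $X$ multiplying as Laurent monomials and $[Y,X^\alpha]=\alpha X^{\alpha-1}$. $\Psi^{(l)}(X^{i/l}Y^j)=x^{i/l}y^j\in K[x^{\pm1/l},y]$; supports are sets of exponents with nonzero coefficient. $\overline{\mathfrak V}=\{(\rho,\sigma)\in\mathbb{Z}^2:\gcd(\rho,\sigma)=1,\rho+\sigma\ge0\}$, $\mathfrak V$ the subset with $\rho+\sigma>0$; $v_{\rho,\sigma}(a,b)=\rho a+\sigma b$. For $P\ne0$: $v_{\rho,\sigma}(P)=\max_{\mathrm{Supp}(P)}v_{\rho,\sigma}$; $\ell_{\rho,\sigma}(P)$ = sum of terms of $\Psi^{(l)}(P)$ attaining it. $\mathrm{st}_{\rho,\sigma}(P)$: among points $(a,b)\in\mathrm{Supp}(\ell_{\rho,\sigma}(P))$ maximizing $a-b$, the one with largest $a$; $\mathrm{en}_{\rho,\sigma}(P)$: among those maximizing $b-a$, the one with largest $b$. $\mathrm{Val}(P)=\{(\rho,\sigma)\in\mathfrak V:\#\mathrm{Supp}(\ell_{\rho,\sigma}(P))>1\}$, $\overline{\mathrm{Val}}(P)=\mathrm{Val}(P)\cup\{(1,-1),(-1,1)\}$. Total order on $\overline{\mathfrak V}$: $(1,-1)<(\rho,\sigma)<(-1,1)$ for $(\rho,\sigma)\in\mathfrak V$, and on $\mathfrak V$, $(\rho_1,\sigma_1)\le(\rho,\sigma)$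 iff $\rho_1\sigma-\sigma_1\rho\ge0$. For $(c,d)\in\frac1l\mathbb{Z}\times\mathbb{Z}$ not a multiple of $(1,1)$, $\mathrm{val}(c,d)$ is the unique $(\rho',\sigma')\in\mathfrak V$ with $\rho'c+\sigma'd=0$. For $(\rho,\sigma)\in\mathfrak V$ put $\mathrm{en}=\mathrm{en}_{\rho,\sigma}(P)$, $\mathrm{st}=\mathrm{st}_{\rho,\sigma}(P)$, $\mathrm{Valsup}=\{\mathrm{val}((a,b)-\mathrm{en}):(a,b)\in\mathrm{Supp}(P),\ v_{-1,1}(a,b)>v_{-1,1}(\mathrm{en})\}$, $\mathrm{Valinf}=\{\mathrm{val}((a,b)-\mathrm{st}):(a,b)\in\mathrm{Supp}(P),\ v_{1,-1}(a,b)>v_{1,-1}(\mathrm{st})\}$; $\mathrm{Succ}_{\rho,\sigma}(P):=\min\mathrm{Valsup}$ (defined when $\mathrm{Valsup}\ne\emptyset$) and $\mathrm{Pred}_{\rho,\sigma}(P):=\max\mathrm{Valinf}$ (defined when $\mathrm{Valinf}\ne\emptyset$). *)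

From HB Require Import structures.
From mathcomp Require Import all_boot all_order all_algebra.
From mathcomp Require Import finmap.
Set Implicit Arguments. Unset Strict Implicit. Unset Printing Implicit Defensive.
Import Order.TTheory GRing.Theory Num.Theory.
Local Open Scope ring_scope.


(* Elements of W^(l) are represented by their (finitely supported) coefficient
   families w.r.t. the K-basis X^{i/l} Y^j, indexed by (i, j) : int * nat.
   The multiplication of W^(l) plays no role in the statement. *)
Definition Weyl (K : fieldType) := {fsfun int * nat -> K with 0}.

(* the exponent (i/l, j) of the monomial x^{i/l} y^j = Psi^(l)(X^{i/l} Y^j) *)
Definition pt (l : nat) (k : int * nat) : rat * rat := (k.1%:~R / l%:R, k.2%:R).

Definition Supp (K : fieldType) (l : nat) (P : Weyl K) : {fset rat * rat} :=
  [fset pt l k | k in finsupp P]%fset.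

Definition v (d : int * int) (p : rat * rat) : rat := d.1%:~R * p.1 + d.2%:~R * p.2.

Definition ellSupp (K : fieldType) (l : nat) (d : int * int) (P : Weyl K) : {fset rat * rat} :=
  [fset p in Supp l P | all (fun q => v d q <= v d p) (Supp l P)]%fset.

Definition st (K : fieldType) (l : nat) (d : int * int) (P : Weyl K) : rat * rat :=
  let L := ellSupp l d P in
  head (0, 0) (enum_fset [fset p in L | all (fun q =>
     (q.1 - q.2 < p.1 - p.2) || ((q.1 - q.2 == p.1 - p.2) && (q.1 <= p.1))) L]%fset).

Definition en (K : fieldType) (l : nat) (d : int * int) (P : Weyl K) : rat * rat :=
  let L := ellSupp l d P in
  head (0, 0) (enum_fset [fset p in L | all (fun q =>
     (q.2 - q.1 < p.2 - p.1) || ((q.2 - q.1 == p.2 - p.1) && (q.2 <= p.2))) L]%fset).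

Definition inV (d : int * int) : bool := (gcdz d.1 d.2 == 1) && (0 < d.1 + d.2).
Definition inVbar (d : int * int) : bool := (gcdz d.1 d.2 == 1) && (0 <= d.1 + d.2).

Definition leV (d1 d : int * int) : bool :=
  if d1 == (1, -1) then true
  else if d == (-1, 1) then true
  else if d1 == (-1, 1) then false
  else if d == (1, -1) then false
  else 0 <= d1.1 * d.2 - d1.2 * d.1.
Definition ltV (d1 d : int * int) : bool := leV d1 d && (d1 != d).

Definition Val (K : fieldType) (l : nat) (P : Weyl K) (d : int * int) : bool :=
  inV d && (1 < #|` ellSupp l d P|)%N.
Definition ValBar (K : fieldType) (l : nat) (P : Weyl K) (d : int * int) : bool :=
  [|| Val l P d, d == (1, -1) | d == (-1, 1)].

Definition is_val (c : rat * rat) (e : int * int) : Prop :=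
  inV e /\ v e c = 0.

Definition psub (p q : rat * rat) : rat * rat := (p.1 - q.1, p.2 - q.2).

Definition Valsup (K : fieldType) (l : nat) (d : int * int) (P : Weyl K) (e : int * int) : Prop :=
  exists2 p, p \in Supp l P &
    v (-1, 1) (en l d P) < v (-1, 1) p /\ is_val (psub p (en l d P)) e.

Definition Valinf (K : fieldType) (l : nat) (d : int * int) (P : Weyl K) (e : int * int) : Prop :=
  exists2 p, p \in Supp l P &
    v (1, -1) (st l d P) < v (1, -1) p /\ is_val (psub p (st l d P)) e.

Definition SuccIs (K : fieldType) (l : nat) (d : int * int) (P : Weyl K) (e : int * int) : Prop :=
  Valsup l d P e /\ forall e', Valsup l d P e' -> leV e e'.

Definition PredIs (K : fieldType) (l : nat) (d : int * int) (P : Weyl K) (e : int * int) : Prop :=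
  Valinf l d P e /\ forall e', Valinf l d P e' -> leV e' e.

From Pilot Require Import Defs.
From HB Require Import structures.
From mathcomp Require Import all_boot all_order all_algebra.
From mathcomp Require Import finmap.
From mathcomp Require Import ring lra zify.
Import Order.TTheory GRing.Theory Num.Theory.
Local Open Scope ring_scope.

(* Directions are compared through the sign of the cross product.  Suppose en_r(P) is
   not on the face of a later direction R, and rotate the direction linearly from r to R,
   w_t = (1 - t) r + t R.  At the first t at which another point of Supp(P) catches up
   with en_r(P), the face of w_t has two points, so a primitive multiple of w_t lies in
   Val(P) strictly between r and R.  Hence, when no element of Val(P) lies between r and
   (rho1, sigma1), en_r(P) lies on the face of (rho1, sigma1), and the segment from it to
   any other point of that face is the first edge met after r: this is Succ.  When r is
   strictly between, the face of r is the single point en_r(P), which is then also the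
   st-point of the face of (rho1, sigma1).  Exchanging the two coordinates reverses the
   order of directions and exchanges st with en and Succ with Pred, so Pred and the
   en-half of (3) follow by symmetry. *)

Definition dot (u p : rat * rat) : rat := u.1 * p.1 + u.2 * p.2.

Definition cross (u w : rat * rat) : rat := u.1 * w.2 - u.2 * w.1.

Definition qdir (d : int * int) : rat * rat := (d.1%:~R, d.2%:~R).

Lemma sum_mul_dot x y c :
  (x.1 + x.2) * dot y c = (y.1 + y.2) * dot x c + cross x y * (c.2 - c.1).
Proof. by rewrite /dot /cross; ring. Qed.

Lemma cross_qdir a b : cross (qdir a) (qdir b) = (a.1 * b.2 - a.2 * b.1)%:~R.
Proof. by rewrite /cross /= intrB !intrM. Qed.

Lemma v_psub d q p : v d (psub q p) = v d q - v d p.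
Proof. by rewrite /v /=; ring. Qed.

Lemma v_m11 p : v (-1, 1) p = p.2 - p.1.
Proof. by rewrite /v /= mulN1r mul1r addrC. Qed.

Lemma psub_eq0 q p : (psub q p == (0, 0)) = (q == p).
Proof. by case: q p => [q1 q2] [p1 p2]; rewrite /psub /= !xpair_eqE !subr_eq0. Qed.

Lemma orth_dir_lt x y c : 0 < x.1 + x.2 -> 0 < y.1 + y.2 -> 0 < cross x y ->
  dot y c = 0 -> dot x c <= 0 -> c != (0, 0) -> c.1 < c.2.
Proof.
move=> x_gt0 y_gt0 xy_gt0 yc xc; have := sum_mul_dot x y c; rewrite yc mulr0 => E.
apply: contraNT; rewrite -leNgt => c21.
have c12 : c.1 = c.2 by nra.
have xc0 : dot x c = 0 by nra.
have c1_0 : c.1 = 0.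
  by move: xc0; rewrite /dot -c12 -mulrDl => /eqP; rewrite mulf_eq0 (gt_eqF x_gt0) => /eqP.
by rewrite [c]surjective_pairing -c12 c1_0.
Qed.

Lemma orth_dir_lex x y c : 0 < x.1 + x.2 -> 0 <= y.1 + y.2 -> 0 < cross x y ->
  dot y c = 0 -> dot x c < 0 -> (c.1 < c.2) || (c.1 == c.2) && (c.1 < 0).
Proof.
move=> x_gt0 y_ge0 xy_gt0 yc xc; have := sum_mul_dot x y c; rewrite yc mulr0 => E.
case: ltgtP => //= c12; first by nra.
by move: xc; rewrite /dot -c12; nra.
Qed.

Lemma orth_dir_cross_ge0 x y c : 0 < x.1 + x.2 -> c.1 < c.2 ->
  dot x c = 0 -> dot y c <= 0 -> 0 <= cross y x.
Proof.
move=> x_gt0 c12 xc yc; have := sum_mul_dot x y c; rewrite xc mulr0 add0r => E.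
have : cross y x = - cross x y by rewrite /cross; ring.
nra.
Qed.

Lemma inVbarP d : inVbar d -> [\/ inV d, d = (1, -1) | d = (-1, 1)].
Proof.
case: d => a b /andP[/= /eqP g]; rewrite le_eqVlt => /orP[/eqP sab | sab].
  have bE : b = - a by lia.
  move: g; rewrite bE (gcdzN a a) gcdzz => a1.
  have [->|->] : a = 1 \/ a = -1 by lia.
  - by constructor 2.
  - by constructor 3.
by constructor 1; rewrite /inV g eqxx.
Qed.

Lemma inV_inVbar {d} : inV d -> inVbar d.
Proof. by case/andP=> g s; rewrite /inVbar g ltW. Qed.

Lemma inV_sum_gt0 {d} : inV d -> 0 < d.1%:~R + d.2%:~R :> rat.
Proof. by case/andP=> _ s; rewrite -intrD ltr0z. Qed.

Lemma inVbar_sum_ge0 {d} : inVbar d -> 0 <= d.1%:~R + d.2%:~R :> rat.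
Proof. by case/andP=> _ s; rewrite -intrD ler0z. Qed.

Lemma inV_neq_boundary {d} : inV d -> ((d == (1, -1)) = false) * ((d == (-1, 1)) = false).
Proof. by move=> dV; split; apply: contraTF dV => /eqP->. Qed.

Lemma inV_parallel_eq e f : inV e -> inV f -> e.1 * f.2 = e.2 * f.1 -> e = f.
Proof.
case: e f => [e1 e2] [f1 f2] /andP[/= /eqP ge se] /andP[/= /eqP gf sf] /= par.
have [u [w uw]] := Bezoutz e1 e2; rewrite ge in uw.
pose t := u * f1 + w * f2.
have f1E : f1 = t * e1.
  rewrite -[f1 in LHS]mulr1 -uw /t.
  by transitivity (u * f1 * e1 + w * (e2 * f1)); [ring | rewrite -par; ring].
have f2E : f2 = t * e2.
  rewrite -[f2 in LHS]mulr1 -uw /t.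
  by transitivity (w * f2 * e2 + u * (e1 * f2)); [ring | rewrite par; ring].
have := mulz_gcdr t e1 e2; rewrite -f1E -f2E ge gf => t1.
have t_gt0 : 0 < t by move: sf; rewrite f1E f2E -mulrDr pmulr_lgt0.
by rewrite f1E f2E (_ : t = 1) ?mul1r //; lia.
Qed.

Lemma int_dir_primitive (X Y : int) : 0 < X + Y ->
  exists2 e, inV e & exists2 g : int, 0 < g & X = e.1 * g /\ Y = e.2 * g.
Proof.
move=> sXY; pose g := gcdz X Y.
have g_gt0 : 0 < g.
  have : g != 0.
    by rewrite gcdz_eq0; apply: contraTN sXY => /andP[/eqP-> /eqP->]; rewrite addr0 ltxx.
  by rewrite lt_def => ->.
have XE : X = (X %/ g)%Z * g by rewrite divzK // dvdz_gcdl.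
have YE : Y = (Y %/ g)%Z * g by rewrite divzK // dvdz_gcdr.
exists ((X %/ g)%Z, (Y %/ g)%Z); last by exists g.
apply/andP; split; last by move: sXY; rewrite /= {1}XE {1}YE -mulrDl pmulr_lgt0.
have := mulz_gcdl (X %/ g)%Z (Y %/ g)%Z g; rewrite -XE -YE -/g abszE gtr0_norm //.
by rewrite -[in RHS](mul1r g) => /(mulIf (lt0r_neq0 g_gt0)) ->.
Qed.

Lemma rat_dir_primitive (u : rat * rat) : 0 < u.1 + u.2 ->
  exists2 e, inV e & exists2 k : rat, 0 < k & (qdir e).1 = k * u.1 /\ (qdir e).2 = k * u.2.
Proof.
case: u => x y /= sxy.
pose D : int := denq x * denq y.
have D_gt0 : 0 < D by rewrite mulr_gt0 ?denq_gt0.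
have xE : (numq x * denq y)%:~R = D%:~R * x :> rat by rewrite !intrM numqE; ring.
have yE : (numq y * denq x)%:~R = D%:~R * y :> rat by rewrite !intrM numqE; ring.
have [|e eV [g g_gt0 [XE YE]]] := int_dir_primitive (numq x * denq y) (numq y * denq x).
  by rewrite -(ltr0z rat) intrD xE yE -mulrDr mulr_gt0 // ltr0z.
have gR : g%:~R != 0 :> rat by rewrite intr_eq0 gt_eqF.
exists e => //; exists (D%:~R / g%:~R); first by rewrite divr_gt0 ?ltr0z.
split; apply: (mulIf gR); by rewrite -intrM -?XE -?YE ?xE ?yE /= mulrAC divfK.
Qed.

(* The two boundary directions are antiparallel: the cross product cannot order them. *)
Lemma leV_cross a b : inVbar a -> inVbar b -> inV a || inV b ->
  leV a b = (0 <= cross (qdir a) (qdir b)).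
Proof.
move=> /inVbarP[aV|->|->] /inVbarP[bV|->|->] //= _.
all: rewrite /leV ?(inV_neq_boundary aV) ?(inV_neq_boundary bV) /= ?cross_qdir ?ler0z //=.
- by case/andP: aV => _ s; apply/esym/negbTE; rewrite -ltNge; lia.
- by case/andP: aV => _ s; apply/esym; lia.
- by case/andP: bV => _ s; apply/esym; lia.
- by case/andP: bV => _ s; apply/esym/negbTE; rewrite -ltNge; lia.
Qed.

Lemma ltV_cross a b : inVbar a -> inVbar b -> inV a || inV b ->
  ltV a b = (0 < cross (qdir a) (qdir b)).
Proof.
move=> aVb bVb abV; rewrite /ltV leV_cross // lt_def andbC; congr (_ && _).
apply/idP/idP; apply: contraNN; last by move/eqP->; rewrite /cross mulrC subrr.
move: aVb bVb abV => /inVbarP[aV|->|->] /inVbarP[bV|->|->] //= _;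
  rewrite cross_qdir intr_eq0 subr_eq0 /= => /eqP par; apply/eqP; first exact: inV_parallel_eq.
all: exfalso; first [move/andP: aV | move/andP: bV] => -[_ s]; lia.
Qed.

Lemma leV_ltV_trans a b c : inVbar a -> inV b -> inV c -> leV a b -> ltV b c -> ltV a c.
Proof.
move=> aVb bV cV; have [bVb cVb] := (inV_inVbar bV, inV_inVbar cV).
rewrite leV_cross ?ltV_cross ?bV ?cV ?orbT // !cross_qdir ?ler0z ?ltr0z.
move: bV cV => /andP[_ sb] /andP[_ sc].
by case/inVbarP: aVb => [/andP[_ sa]|->|->] /=; nia.
Qed.

Lemma exists_max {T : eqType} {R : rel T} {s : seq T} {x : T} :
  total R -> transitive R -> x \in s -> exists2 m, m \in s & {in s, forall q, R q m}.
Proof.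
move=> Rtot Rtr xs; pose Rc : rel T := fun a b => R b a.
have Rctot : total Rc by move=> a b; rewrite /Rc orbC.
have Rctr : transitive Rc by move=> b a c ba cb; exact: Rtr cb ba.
have := sort_sorted Rctot s; have := mem_sort Rc s.
case: (sort Rc s) => [|m t] smem; first by rewrite -smem in xs.
move=> /(order_path_min Rctr) /allP mt; exists m; first by rewrite -smem mem_head.
move=> q; rewrite -smem in_cons => /orP[/eqP->|/mt //].
by have := Rtot m m; rewrite orbb.
Qed.

Lemma affine_first_zero {T : eqType} (s : seq T) (a b : T -> rat) {x} :
  x \in s -> {in s, forall y, a y <= 0} -> 0 < b x ->
  exists t, [/\ 0 <= t < 1, {in s, forall y, (1 - t) * a y + t * b y <= 0}
              & exists2 z, z \in s & 0 < b z /\ (1 - t) * a z + t * b z = 0].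
Proof.
move=> xs a_le0 bx_gt0; pose root y := a y / (a y - b y).
have rootE y : y \in s -> 0 < b y -> root y * (a y - b y) = a y.
  by move=> ys by_gt0; rewrite divfK // subr_eq0 lt_eqF // (le_lt_trans (a_le0 y ys)).
have xT : x \in [seq y <- s | 0 < b y] by rewrite mem_filter bx_gt0.
have [z] := exists_max (R := fun y z => root z <= root y)
  (fun _ _ => le_total _ _) (fun _ _ _ h1 h2 => le_trans h2 h1) xT.
rewrite mem_filter => /andP[bz_gt0 zs] zmin; have := rootE z zs bz_gt0; have := a_le0 z zs.
move=> az_le0 rzE; exists (root z); split.
- by apply/andP; split; nra.
- move=> y ys; have := a_le0 y ys; case: (ltP 0 (b y)) => by_gt0 ay_le0; last by nra.
  by have := zmin y; rewrite mem_filter by_gt0 ys => /(_ isT); have := rootE y ys by_gt0; nra.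
- by exists z => //; split => //; nra.
Qed.

Lemma cardfs_gt1P (K : choiceType) (A : {fset K}) p :
  p \in A -> reflect (exists2 q, q \in A & q != p) (1 < #|` A|)%N.
Proof.
move=> pA; rewrite (cardfsD1 p) pA add1n ltnS lt0n cardfs_eq0.
apply: (iffP (fset0Pn _)) => -[q].
  by rewrite in_fsetD1 => /andP[qp qA]; exists q.
by move=> qA qp; exists q; rewrite in_fsetD1 qp.
Qed.

Lemma fset_card_le1 (K : choiceType) (A : {fset K}) p :
  p \in A -> (#|` A| <= 1)%N -> A = [fset p]%fset.
Proof.
move=> pA Acard; apply/fsetP => q; rewrite inE; apply/idP/eqP => [qA|->//].
apply/eqP; apply: contraTT Acard => qp; rewrite -ltnNge.
by apply/(cardfs_gt1P _ _ _ pA); exists q.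
Qed.

Definition top (R : rel (rat * rat)) (L : {fset rat * rat}) : rat * rat :=
  head (0, 0) (enum_fset [fset p in L | all (fun q => R q p) L]%fset).

Section Top.
Variable R : rel (rat * rat).
Hypotheses (Rtot : total R) (Rtr : transitive R).

Lemma top_max {L x} : x \in L -> top R L \in L /\ {in L, forall q, R q (top R L)}.
Proof.
move=> xL; have [m mL mmax] := exists_max (s := enum_fset L) Rtot Rtr xL.
set F := [fset p in L | all (fun q => R q p) L]%fset.
have mF : m \in enum_fset F by rewrite !inE mL; apply/allP.
have : top R L \in enum_fset F by rewrite /top; case: enum_fset mF => //= t s _; rewrite mem_head.
by rewrite !inE => /andP[? /allP].
Qed.

Lemma top_unique {L p} :
  antisymmetric R -> p \in L -> {in L, forall q, R q p} -> top R L = p.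
Proof.
move=> Ranti pL pmax; have [tL tmax] := top_max pL.
by apply: Ranti; rewrite pmax ?tmax.
Qed.

End Top.

(* Set-level versions of ellSupp, st, en, Valsup, Valinf, SuccIs and PredIs: for
   S = Supp l P they are convertible to those of Defs, and unlike those they also apply
   to the coordinate-swapped set [swap_set S]. *)

Definition face (S : {fset rat * rat}) (d : int * int) : {fset rat * rat} :=
  [fset p in S | all (fun q => v d q <= v d p) S]%fset.

Definition swap_pt (p : rat * rat) : rat * rat := (p.2, p.1).

Definition st_rel : rel (rat * rat) :=
  fun q p => (q.1 - q.2 < p.1 - p.2) || ((q.1 - q.2 == p.1 - p.2) && (q.1 <= p.1)).

Definition en_rel : rel (rat * rat) := fun q p => st_rel (swap_pt q) (swap_pt p).

Definition st_face S d := top st_rel (face S d).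

Definition en_face S d := top en_rel (face S d).

Definition above (S : {fset rat * rat}) p e :=
  exists2 q, q \in S & v (-1, 1) p < v (-1, 1) q /\ is_val (psub q p) e.

Definition below (S : {fset rat * rat}) p e :=
  exists2 q, q \in S & v (1, -1) p < v (1, -1) q /\ is_val (psub q p) e.

Definition min_dir (A : int * int -> Prop) e := A e /\ forall e', A e' -> leV e e'.

Definition max_dir (A : int * int -> Prop) e := A e /\ forall e', A e' -> leV e' e.

Lemma faceP S d p :
  reflect (p \in S /\ {in S, forall q, v d q <= v d p}) (p \in face S d).
Proof. by rewrite !inE; apply: (iffP andP) => -[pS /allP]. Qed.

Lemma face_nonempty {S} d : S != fset0 -> exists p, p \in face S d.
Proof.
case/fset0Pn => x xS.
have [p pS pmax] := exists_max (s := enum_fset S) (R := fun q p => v d q <= v d p)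
  (fun _ _ => le_total _ _) (fun _ _ _ => @le_trans _ _ _ _ _) xS.
by exists p; apply/faceP.
Qed.

Lemma st_rel_total : total st_rel.
Proof.
move=> q p; rewrite /st_rel; case: ltgtP => //= _.
by case: leP => // /ltW ->; rewrite orbT.
Qed.

Lemma st_rel_trans : transitive st_rel.
Proof.
move=> p q s /orP[qp|/andP[/eqP qp qp1]] /orP[ps|/andP[/eqP ps ps1]].
- by rewrite /st_rel (lt_trans qp ps).
- by rewrite /st_rel -ps qp.
- by rewrite /st_rel qp ps.
- by rewrite /st_rel qp ps eqxx (le_trans qp1 ps1) orbT.
Qed.

Lemma st_rel_anti : antisymmetric st_rel.
Proof.
move=> [q1 q2] [p1 p2]; rewrite /st_rel /=.
case: ltgtP => //= qp /le_anti q1E.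
by congr pair; move: qp; rewrite q1E; lra.
Qed.

Lemma en_rel_total : total en_rel.
Proof. by move=> q p; exact: st_rel_total. Qed.

Lemma en_rel_trans : transitive en_rel.
Proof. by move=> q p s; exact: st_rel_trans. Qed.

Lemma en_face_max {S} d : S != fset0 ->
  en_face S d \in face S d /\ {in face S d, forall q, en_rel q (en_face S d)}.
Proof. by move=> /(face_nonempty d) [x /(top_max _ en_rel_total en_rel_trans)]. Qed.

Definition swap_dir (d : int * int) : int * int := (d.2, d.1).

Definition swap_set (S : {fset rat * rat}) : {fset rat * rat} := [fset swap_pt p | p in S]%fset.

Lemma swap_ptK : involutive swap_pt. Proof. by case. Qed.

Lemma swap_dirK : involutive swap_dir. Proof. by case. Qed.

Lemma mem_swap_set S p : (p \in swap_set S) = (swap_pt p \in S).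
Proof. by rewrite -{1}[p]swap_ptK mem_imfset //; exact: inv_inj swap_ptK. Qed.

Lemma swap_setK : involutive swap_set.
Proof. by move=> S; apply/fsetP => p; rewrite !mem_swap_set swap_ptK. Qed.

Lemma card_swap_set S : #|` swap_set S| = #|` S|.
Proof. by rewrite card_imfset //; exact: inv_inj swap_ptK. Qed.

Lemma swap_set1 p : swap_set [fset p]%fset = [fset swap_pt p]%fset.
Proof. by apply/fsetP => q; rewrite mem_swap_set !inE -(inj_eq (inv_inj swap_ptK)) swap_ptK. Qed.

Lemma swap_set_eq0 S : (swap_set S == fset0) = (S == fset0).
Proof. by rewrite -!cardfs_eq0 card_swap_set. Qed.

Lemma v_swap d p : v (swap_dir d) (swap_pt p) = v d p.
Proof. by rewrite /v addrC. Qed.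

Lemma inV_swap d : inV (swap_dir d) = inV d.
Proof. by rewrite /inV /= gcdzC addrC. Qed.

Lemma inVbar_swap d : inVbar (swap_dir d) = inVbar d.
Proof. by rewrite /inVbar /= gcdzC addrC. Qed.

Lemma leV_swap a b : inVbar a -> inVbar b -> leV (swap_dir a) (swap_dir b) = leV b a.
Proof.
move=> aVb bVb; case abV: (inV a || inV b).
  have baV : inV b || inV a by rewrite orbC.
  rewrite !leV_cross ?inVbar_swap ?inV_swap //.
  by congr (0 <= _); rewrite /cross /=; ring.
by move: aVb bVb abV => /inVbarP[->|->|->] /inVbarP[->|->|->].
Qed.

Lemma ltV_swap a b : inVbar a -> inVbar b -> ltV (swap_dir a) (swap_dir b) = ltV b a.
Proof. by move=> aV bV; rewrite /ltV leV_swap // (inj_eq (inv_inj swap_dirK)) eq_sym. Qed.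

Lemma face_swap S d : face (swap_set S) (swap_dir d) = swap_set (face S d).
Proof.
apply/fsetP => p; rewrite mem_swap_set.
apply/faceP/faceP => -[pS pmax]; split.
- by rewrite -mem_swap_set.
- move=> q qS; rewrite -(v_swap d q) -(v_swap d (swap_pt p)) swap_ptK.
  by apply: pmax; rewrite mem_swap_set swap_ptK.
- by rewrite mem_swap_set.
- move=> q; rewrite mem_swap_set => /pmax.
  by rewrite -(v_swap d (swap_pt q)) -(v_swap d (swap_pt p)) !swap_ptK.
Qed.

Lemma st_face_swap S d : S != fset0 ->
  st_face (swap_set S) (swap_dir d) = swap_pt (en_face S d).
Proof.
move=> /(en_face_max d) [enF enmax]; rewrite /st_face face_swap.
apply: (top_unique _ st_rel_total st_rel_trans st_rel_anti); first by rewrite mem_swap_set swap_ptK.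
by move=> q; rewrite mem_swap_set => /enmax; rewrite /en_rel swap_ptK.
Qed.

Lemma en_face_swap S d : S != fset0 ->
  en_face (swap_set S) (swap_dir d) = swap_pt (st_face S d).
Proof.
move=> S_neq0; rewrite -[in RHS](swap_setK S) -[in RHS](swap_dirK d) st_face_swap ?swap_ptK //.
by rewrite swap_set_eq0.
Qed.

Lemma is_val_swap c e : is_val (swap_pt c) (swap_dir e) <-> is_val c e.
Proof. by rewrite /is_val inV_swap v_swap. Qed.

Lemma above_swap S p e : above (swap_set S) (swap_pt p) (swap_dir e) <-> below S p e.
Proof.
have vs q : v (-1, 1) (swap_pt q) = v (1, -1) q := v_swap (1, -1) q.
split=> -[q qS [pq qv]].
- exists (swap_pt q); first by rewrite -mem_swap_set.
  by rewrite -vs -[v (1, -1) (swap_pt q)]vs swap_ptK; split=> //; apply/is_val_swap.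
- exists (swap_pt q); first by rewrite mem_swap_set swap_ptK.
  by rewrite vs [v (-1, 1) (swap_pt q)]vs; split=> //; apply/(is_val_swap (psub q p)).
Qed.

Lemma min_dir_above_swap S p e : inV e ->
  min_dir (above (swap_set S) (swap_pt p)) (swap_dir e) -> max_dir (below S p) e.
Proof.
move=> eV [/above_swap pe emin]; split=> // e' e'B.
have e'V : inV e' by case: e'B => ? _ [_ []].
by rewrite -leV_swap ?(inV_inVbar eV) ?(inV_inVbar e'V) //; apply/emin/above_swap.
Qed.

Lemma edge_between {S r u p s} :
  inV r -> 0 <= u.1 + u.2 -> 0 < cross (qdir r) u ->
  p \in face S r -> {in face S r, forall q, q.2 - q.1 <= p.2 - p.1} ->
  s \in S -> dot u p < dot u s ->
  exists2 e, inV e /\ (1 < #|` face S e|)%N & 0 < cross (qdir r) (qdir e) /\ 0 < cross (qdir e) u.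
Proof.
move=> rV u_ge0 ru_gt0 /faceP[pS pmax] p_en sS us.
have r_gt0 := inV_sum_gt0 rV.
pose a q := v r q - v r p; pose b q := dot u q - dot u p.
have a_le0 : {in enum_fset S, forall q, a q <= 0} by move=> q /pmax; rewrite subr_le0.
have bs_gt0 : 0 < b s by rewrite subr_gt0.
have [t [/andP[t_ge0 t_lt1] t_max [z zS [bz_gt0 tz]]]] :=
  affine_first_zero (enum_fset S) a b sS a_le0 bs_gt0.
(* If t = 0, then z is on the face of r and z.2 - z.1 > p.2 - p.1, against the choice of p. *)
have t_gt0 : 0 < t.
  rewrite lt_def t_ge0 andbT; apply/eqP => t0; move: tz; rewrite t0 subr0 mul1r mul0r addr0.
  move=> /eqP; rewrite subr_eq0 => /eqP vz.
  have /p_en : z \in face S r by apply/faceP; split => // q /pmax; rewrite vz.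
  have := sum_mul_dot (qdir r) u (z.1 - p.1, z.2 - p.2).
  have : dot (qdir r) (z.1 - p.1, z.2 - p.2) = 0 by move: vz; rewrite /dot /v /=; lra.
  have : dot u (z.1 - p.1, z.2 - p.2) = b z by rewrite /b /dot /=; ring.
  move=> -> -> /= E zp; move: (mulr_gt0 r_gt0 bz_gt0).
  by rewrite E mulr0 add0r pmulr_rgt0 //=; lra.
pose w := ((1 - t) * (qdir r).1 + t * u.1, (1 - t) * (qdir r).2 + t * u.2).
have [|e eV [k k_gt0 [e1 e2]]] := rat_dir_primitive w; first by rewrite /w /=; nra.
have ve q : v e q - v e p = k * ((1 - t) * a q + t * b q).
  by rewrite /v -[e.1%:~R]/((qdir e).1) -[e.2%:~R]/((qdir e).2) e1 e2 /a /b /v /dot /w /=; ring.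
have eF q : q \in S -> (1 - t) * a q + t * b q = 0 -> q \in face S e.
  move=> qS q0; apply/faceP; split => // y yS; rewrite -subr_le0.
  have := ve y; have := ve q; have := t_max y yS; rewrite q0 mulr0 => fy vq vy; nra.
exists e; first split => //.
  apply/(cardfs_gt1P _ _ z (eF z zS tz)); exists p.
    by apply: eF pS _; rewrite /a /b !subrr !mulr0 addr0.
  by apply: contraTneq bz_gt0 => <-; rewrite /b subrr ltxx.
have [-> ->] : cross (qdir r) (qdir e) = k * t * cross (qdir r) u /\
               cross (qdir e) u = k * (1 - t) * cross (qdir r) u.
  by rewrite /cross e1 e2 /w /=; split; ring.
by split; rewrite !mulr_gt0 // subr_gt0.
Qed.

Definition no_edge_between S a b :=
  forall e, inV e -> ltV a e -> ltV e b -> (#|` face S e| <= 1)%N.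

Lemma no_edge_between_swap S a b : inVbar a -> inVbar b ->
  no_edge_between S a b -> no_edge_between (swap_set S) (swap_dir b) (swap_dir a).
Proof.
move=> aV bV noedge e eV be ea; have eVb : inVbar (swap_dir e) by rewrite inVbar_swap inV_inVbar.
rewrite -[e]swap_dirK face_swap card_swap_set; apply: noedge; first by rewrite inV_swap.
- by rewrite -(ltV_swap (swap_dir e) a) ?swap_dirK.
- by rewrite -[b]swap_dirK ltV_swap ?inVbar_swap ?(inV_inVbar eV).
Qed.

Lemma en_face_in_face_above S r R : S != fset0 -> inV r -> inVbar R -> ltV r R ->
  no_edge_between S r R -> en_face S r \in face S R.
Proof.
move=> S_neq0 rV RV rR noedge; have [enF enmax] := en_face_max r S_neq0.
have rR_gt0 : 0 < cross (qdir r) (qdir R) by rewrite -ltV_cross ?(inV_inVbar rV) ?rV.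
apply/faceP; split; first by have /faceP[] := enF.
move=> s sS; rewrite leNgt; apply/negP => sR.
have en_top q : q \in face S r -> q.2 - q.1 <= (en_face S r).2 - (en_face S r).1.
  by move=> /enmax /orP[/ltW | /andP[/eqP-> _]].
have [e [eV ecard] [re eR]] :=
  edge_between (u := qdir R) rV (inVbar_sum_ge0 RV) rR_gt0 enF en_top sS sR.
have := noedge e eV; rewrite !ltV_cross ?(inV_inVbar rV) ?(inV_inVbar eV) ?eV ?rV ?orbT //.
by move=> /(_ re eR); rewrite leqNgt ecard.
Qed.

Lemma min_dir_above_of_faces {S r R p} : inV r -> inV R -> ltV r R -> (1 < #|` face S R|)%N ->
  p \in face S r -> p \in face S R -> min_dir (above S p) R.
Proof.
move=> rV RV rR Rcard /faceP[pS prmax] pRF; have /faceP[_ pRmax] := pRF.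
have /(cardfs_gt1P _ _ _ pRF)[q qRF qp] := Rcard; have /faceP[qS qRmax] := qRF.
have qpR : v R (psub q p) = 0 by rewrite v_psub; apply/eqP; rewrite subr_eq0 eq_le pRmax ?qRmax.
split.
  exists q => //; split; last by [].
  rewrite !v_m11; suff : (psub q p).1 < (psub q p).2 by rewrite /=; lra.
  apply: (orth_dir_lt (qdir r) (qdir R) _ (inV_sum_gt0 rV) (inV_sum_gt0 RV)).
  - by rewrite -ltV_cross ?(inV_inVbar rV) ?(inV_inVbar RV) ?rV.
  - exact: qpR.
  - by rewrite -[dot _ _]/(v r _) v_psub subr_le0 prmax.
  - by rewrite psub_eq0.
move=> e [s sS [ps [eV es]]].
rewrite leV_cross ?(inV_inVbar RV) ?(inV_inVbar eV) ?RV; [|by []..].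
apply: (orth_dir_cross_ge0 (qdir e) (qdir R) (psub s p) (inV_sum_gt0 eV)).
- by move: ps; rewrite !v_m11 /=; lra.
- exact: es.
- by rewrite -[dot _ _]/(v R _) v_psub subr_le0 pRmax.
Qed.

Lemma st_face_of_singleton_face {S r R p} : inV r -> inVbar R -> ltV r R ->
  face S r = [fset p]%fset -> p \in face S R -> st_face S R = p.
Proof.
move=> rV RV rR rF pRF; have /faceP[pS pRmax] := pRF.
have /faceP[_ prmax] : p \in face S r by rewrite rF inE.
have rR_gt0 : 0 < cross (qdir r) (qdir R) by rewrite -ltV_cross ?(inV_inVbar rV) ?rV.
apply: (top_unique _ st_rel_total st_rel_trans st_rel_anti pRF) => q qRF.
have /faceP[qS qRmax] := qRF.
have [->|qp] := eqVneq q p; first by rewrite /st_rel eqxx lexx orbT.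
have qr : v r (psub q p) < 0.
  rewrite v_psub subr_lt0 lt_neqAle prmax // andbT; apply: contra qp => /eqP qpr.
  by rewrite -in_fset1 -rF; apply/faceP; split=> // s /prmax; rewrite qpr.
have qR : v R (psub q p) = 0 by rewrite v_psub; apply/eqP; rewrite subr_eq0 eq_le pRmax ?qRmax.
have := orth_dir_lex (qdir r) (qdir R) (psub q p) (inV_sum_gt0 rV) (inVbar_sum_ge0 RV) rR_gt0 qR qr.
rewrite /st_rel /= => /orP[c12|/andP[/eqP c12 c1]]; apply/orP; [left; lra | right].
by apply/andP; split; [apply/eqP|]; lra.
Qed.

Section Between.
Variables (S : {fset rat * rat}) (r1 r2 r : int * int).
Hypotheses (S_neq0 : S != fset0) (r1V : inVbar r1) (r2V : inVbar r2)
  (noedge : no_edge_between S r2 r1) (rV : inV r).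

Lemma no_edge_between_r : leV r2 r -> no_edge_between S r r1.
Proof. by move=> r2r e eV re er1; apply: noedge => //; exact: leV_ltV_trans r2r re. Qed.

Lemma succ_between : inV r1 -> (1 < #|` face S r1|)%N -> ltV r r1 -> leV r2 r ->
  min_dir (above S (en_face S r)) r1.
Proof.
move=> r1V' r1card rr1 r2r; have [enF _] := en_face_max r S_neq0.
apply: (min_dir_above_of_faces rV r1V' rr1 r1card enF).
by apply: en_face_in_face_above => //; exact: no_edge_between_r.
Qed.

Lemma face_eq_st_face : ltV r r1 -> ltV r2 r -> face S r = [fset st_face S r1]%fset.
Proof.
move=> rr1 r2r; have [enF _] := en_face_max r S_neq0.
have rF : face S r = [fset en_face S r]%fset by apply: fset_card_le1 => //; exact: noedge.
rewrite rF (st_face_of_singleton_face rV r1V rr1 rF) //.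
by apply: en_face_in_face_above => //; apply: no_edge_between_r; case/andP: r2r.
Qed.

End Between.

Lemma pred_between S r1 r2 r : S != fset0 -> inVbar r1 -> inVbar r2 ->
  no_edge_between S r2 r1 -> inV r -> inV r2 -> (1 < #|` face S r2|)%N ->
  leV r r1 -> ltV r2 r -> max_dir (below S (st_face S r)) r2.
Proof.
move=> S_neq0 r1V r2V noedge rV r2V' r2card rr1 r2r.
apply: (min_dir_above_swap _ _ _ r2V'); rewrite -en_face_swap //.
apply: (succ_between (swap_set S) (swap_dir r2) (swap_dir r1) (swap_dir r));
  rewrite ?swap_set_eq0 ?inVbar_swap ?inV_swap ?face_swap ?card_swap_set //.
- exact: no_edge_between_swap.
- by rewrite ltV_swap ?inVbar_swap ?(inV_inVbar rV).
- by rewrite leV_swap ?(inV_inVbar rV).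
Qed.

Lemma face_eq_en_face S r1 r2 r : S != fset0 -> inVbar r1 -> inVbar r2 ->
  no_edge_between S r2 r1 -> inV r -> ltV r r1 -> ltV r2 r ->
  face S r = [fset en_face S r2]%fset.
Proof.
move=> S_neq0 r1V r2V noedge rV rr1 r2r; apply: (can_inj swap_setK).
rewrite swap_set1 -st_face_swap // -face_swap.
apply: (face_eq_st_face (swap_set S) (swap_dir r2) (swap_dir r1) (swap_dir r));
  rewrite ?swap_set_eq0 ?inVbar_swap ?inV_swap //.
- exact: no_edge_between_swap.
- by rewrite ltV_swap ?inVbar_swap ?(inV_inVbar rV).
- by rewrite ltV_swap ?inVbar_swap ?(inV_inVbar rV).
Qed.

Theorem proposition2p23 (K : fieldType) (charK : [pchar K] =i pred0)
  (l : nat) (hl : (0 < l)%N) (P : Weyl K) (hP : exists k, P k != 0)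
  (r1 r2 : int * int) :
  ValBar l P r1 -> ValBar l P r2 -> ltV r2 r1 ->
  (forall e, ValBar l P e -> ~~ (ltV r2 e && ltV e r1)) ->
  forall r : int * int, inV r ->
  [/\ (Val l P r1 -> ltV r r1 -> leV r2 r -> SuccIs l r P r1),
      (Val l P r2 -> leV r r1 -> ltV r2 r -> PredIs l r P r2) &
      (ltV r r1 -> ltV r2 r ->
         [fset st l r1 P]%fset = ellSupp l r P /\ ellSupp l r P = [fset en l r2 P]%fset)].
Proof.
move=> r1B r2B _ hcons r rV; set S := Supp l P.
have S_neq0 : S != fset0.
  case: hP => k Pk; apply/fset0Pn; exists (pt l k); apply/imfsetP; exists k => //.
  by rewrite mem_finsupp.
have ValBar_inVbar e : ValBar l P e -> inVbar e.
  by case/or3P => [/andP[/inV_inVbar ? _]|/eqP->|/eqP->].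
have [r1V r2V] := (ValBar_inVbar _ r1B, ValBar_inVbar _ r2B).
have noedge : no_edge_between S r2 r1.
  move=> e eV r2e er1; rewrite leqNgt; apply/negP => ecard.
  have eVal : Val l P e by rewrite /Val eV; exact: ecard.
  by have := hcons e; rewrite /ValBar eVal r2e er1 => /(_ isT).
split.
- by case/andP=> r1V' r1card rr1 r2r; exact: (succ_between S r1 r2 r S_neq0 r1V r2V noedge rV).
- by case/andP=> r2V' r2card rr1 r2r; exact: (pred_between S r1 r2 r S_neq0 r1V r2V noedge rV).
- move=> rr1 r2r; split.
    exact: esym (face_eq_st_face S r1 r2 r S_neq0 r1V r2V noedge rV rr1 r2r).
  exact: (face_eq_en_face S r1 r2 r S_neq0 r1V r2V noedge rV rr1 r2r).
Qed.
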